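(* For every integer $n\ge 4$, $\chi_{ei}(C_5\square C_n)=5$.
   Context: All graphs are finite and simple. $C_k$ denotes the cycle on $k$ vertices. A path $P_4$ in $G$ is a sequence $uxyv$ of four distinct vertices with $ux,xy,yv\in E(G)$; $u,v$ are its end vertices. An $e$-injective $k$-coloring of $G$ is a function $f:V(G)\to\{1,\dots,k\}$ with $f(u)\ne f(v)$ whenever $u,v$ are the end vertices of some path $P_4$ in $G$; $\chi_{ei}(G)$ is the least such $k$. In the Cartesian product $G\square H$ two vertices are adjacent if they are adjacent in one coordinate and equal in the other. *)

From mathcomp Require Import all_boot.
Set Implicit Arguments. Unset Strict Implicit. Unset Printing Implicit Defensive.

Definition cycle_rel (k : nat) : rel 'I_k :=
  fun i j => (j == (i.+1 %% k) :> nat) || (i == (j.+1 %% k) :> nat).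

Definition box_rel (T U : finType) (e1 : rel T) (e2 : rel U) : rel (T * U) :=
  fun p q => (e1 p.1 q.1 && (p.2 == q.2)) || ((p.1 == q.1) && e2 p.2 q.2).

Definition P4_ends (T : finType) (e : rel T) (u v : T) : Prop :=
  exists x y : T, uniq [:: u; x; y; v] /\ e u x /\ e x y /\ e y v.

Definition ei_coloring (T : finType) (e : rel T) (k : nat) (f : T -> 'I_k) : Prop :=
  forall u v : T, P4_ends e u v -> f u <> f v.

Definition has_ei_coloring (T : finType) (e : rel T) (k : nat) : Prop :=
  exists f : T -> 'I_k, ei_coloring e f.

Definition chi_ei_eq (T : finType) (e : rel T) (k : nat) : Prop :=
  has_ei_coloring e k /\ forall k', has_ei_coloring e k' -> k <= k'.

Definition C5_box_Cn (n : nat) : rel ('I_5 * 'I_n) :=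
  box_rel (@cycle_rel 5) (@cycle_rel n).
Arguments C5_box_Cn n : clear implicits.

(* A P4 u x y v whose ends get the same colour under a homomorphism into a
   triangle-free graph would map onto a triangle, so homomorphisms into C5 are
   e-injective 5-colourings. C5 □ Cn maps onto C5 by (i, j) |-> i + w(j), where w
   winds Cn around C5 (possible as n is even or n >= 5). Conversely, two distinct
   vertices of a layer C5 × {j} are either adjacent, and then the ends of the P4
   through a neighbouring layer, or at distance two, and then the ends of the
   other arc of C5; so the five vertices of a layer need five colours. *)

From mathcomp Require Import all_boot zify.

Set Implicit Arguments.
Unset Strict Implicit.
Unset Printing Implicit Defensive.

Lemma ei_coloring_hom (T : finType) (e : rel T) (k : nat) (e' : rel 'I_k) (f : T -> 'I_k) :
  (forall a b c, e' a b -> e' b c -> ~~ e' c a) ->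
  {homo f : p q / e p q >-> e' p q} -> ei_coloring e f.
Proof.
move=> no_triangle f_hom u v [x [y [_ [eux [exy eyv]]]]] fuv.
by have := no_triangle _ _ _ (f_hom _ _ eux) (f_hom _ _ exy); rewrite fuv f_hom.
Qed.

Lemma cycle_rel_sym (k : nat) : symmetric (@cycle_rel k).
Proof. by move=> i j; rewrite /cycle_rel orbC. Qed.

Lemma cycle_succ_mod (k : nat) (i : 'I_k) : i.+1 %% k = if i.+1 == k then 0 else i.+1.
Proof.
have := ltn_ord i; rewrite leq_eqVlt => /orP[/eqP -> | lt_ik]; first by rewrite eqxx modnn.
by rewrite modn_small // ltn_eqF.
Qed.

Lemma cycle_rel_triangle_free (k : nat) : 3 < k ->
  forall a b c : 'I_k, cycle_rel a b -> cycle_rel b c -> ~~ cycle_rel c a.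
Proof.
move=> k_gt3 a b c; move: (ltn_ord a) (ltn_ord b) (ltn_ord c); rewrite /cycle_rel !cycle_succ_mod.
by do 3 case: ifP => /eqP ?; lia.
Qed.

Definition cycle_hom (T : Type) (k : nat) (e : rel T) (f : T -> nat) : Prop :=
  forall p q, e p q -> (f q == (f p).+1 %[mod k]) || (f p == (f q).+1 %[mod k]).

Lemma cycle_hom_val (k : nat) : cycle_hom k (@cycle_rel k) (@nat_of_ord k).
Proof. by move=> i j /orP[] /eqP ->; rewrite modn_mod eqxx ?orbT. Qed.

Lemma cycle_hom_box (T U : finType) (k : nat) (e1 : rel T) (e2 : rel U) f g :
  cycle_hom k e1 f -> cycle_hom k e2 g ->
  cycle_hom k (box_rel e1 e2) (fun p => f p.1 + g p.2).
Proof.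
move=> f_hom g_hom [x y] [x' y'] /orP[] /andP[] /=.
- by move=> /f_hom + /eqP <-; rewrite -!addSn !eqn_modDr.
- by move=> /eqP <- /g_hom; rewrite -!addnS !eqn_modDl.
Qed.

Lemma cycle_hom_mod (T : Type) (k : nat) (k_gt0 : 0 < k) (e : rel T) (f : T -> nat) :
  cycle_hom k e f ->
  {homo (fun p => Ordinal (ltn_pmod (f p) k_gt0)) : p q / e p q >-> cycle_rel p q}.
Proof.
have modS m : (m %% k).+1 %% k = m.+1 %% k by rewrite -addn1 modnDml addn1.
by move=> f_hom p q /f_hom; rewrite /cycle_rel /= !modS.
Qed.

(* Alternate between 0 and 1, except that for odd n the last five vertices go
   once around C5. *)
Definition wind5 (n j : nat) : nat := if odd n && (n - 5 <= j) then j - (n - 5) else j %% 2.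

Lemma cycle_hom_wind5 (n : nat) : 4 <= n -> cycle_hom 5 (@cycle_rel n) (wind5 n).
Proof.
move=> n_ge4.
have step (j : 'I_n) : (wind5 n (j.+1 %% n) == (wind5 n j).+1 %[mod 5])
                       || (wind5 n j == (wind5 n (j.+1 %% n)).+1 %[mod 5]).
  rewrite cycle_succ_mod /wind5; have := ltn_ord j; have := modn2 n.
  by case: (odd n) => /=; do ! case: ifPn; move=> *; rewrite ?mod0n; lia.
by move=> i j /orP[] /eqP ->; [|rewrite orbC]; apply: step.
Qed.

Lemma P4_ends_box_l (T U : finType) (e1 : rel T) (e2 : rel U) (i i' : T) (j : U) :
  P4_ends e1 i i' -> P4_ends (box_rel e1 e2) (i, j) (i', j).
Proof.
move=> [a [b [uniq_path [e_ia [e_ab e_bi']]]]]; exists (a, j), (b, j).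
split; first exact: (@map_uniq _ _ fst).
by rewrite /box_rel /= eqxx e_ia e_ab e_bi'.
Qed.

Lemma P4_ends_box_edge (T U : finType) (e1 : rel T) (e2 : rel U) (i i' : T) (j j' : U) :
  symmetric e2 -> i != i' -> j != j' -> e1 i i' -> e2 j j' ->
  P4_ends (box_rel e1 e2) (i, j) (i', j).
Proof.
move=> e2_sym ii' jj' e_ii' e_jj'; exists (i, j'), (i', j').
rewrite /box_rel /= !inE !xpair_eqE !eqxx e_ii' e_jj' e2_sym e_jj' /=.
by rewrite (negbTE ii') (negbTE jj') [j' == j]eq_sym (negbTE jj') !andbF !orbT.
Qed.

Lemma C5_adj_or_P4_ends (i i' : 'I_5) :
  i != i' -> cycle_rel i i' \/ P4_ends (@cycle_rel 5) i i'.
Proof.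
case: (boolP (cycle_rel i i')) => [|not_adj neq]; [by left | right].
pose mod5 m : 'I_5 := Ordinal (ltn_pmod m (ltn0Sn 4)).
move: not_adj neq; rewrite /cycle_rel -val_eqE /=; have := ltn_ord i; have := ltn_ord i'.
(* i' = i +- 2, and the other arc of C5 from i to i' has length 3 *)
case: (boolP (i' == (i + 2) %% 5 :> nat)) => ? *.
- exists (mod5 (i + 4)), (mod5 (i + 3)); rewrite /= !inE -!val_eqE /=; lia.
- exists (mod5 (i + 1)), (mod5 (i + 2)); rewrite /= !inE -!val_eqE /=; lia.
Qed.

Lemma ei_coloring_layer_inj (T U : finType) (e1 : rel T) (e2 : rel U) (k : nat)
    (f : T * U -> 'I_k) (j j' : U) :
  (forall i i', i != i' -> e1 i i' \/ P4_ends e1 i i') ->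
  symmetric e2 -> e2 j j' -> j != j' ->
  ei_coloring (box_rel e1 e2) f -> injective (fun i => f (i, j)).
Proof.
move=> adj_or_P4 e2_sym e_jj' jj' f_ei i i' fii'; case: (eqVneq i i') => // ii'.
exfalso; apply: (f_ei _ _ _ fii'); case: (adj_or_P4 _ _ ii') => [e_ii' | P4_ii'].
- exact: P4_ends_box_edge e2_sym ii' jj' e_ii' e_jj'.
- exact: P4_ends_box_l.
Qed.

Theorem theorem4p8 (n : nat) : 4 <= n -> chi_ei_eq (C5_box_Cn n) 5.
Proof.
move=> n_ge4; split.
- exists (fun p : 'I_5 * 'I_n => Ordinal (ltn_pmod (p.1 + wind5 n p.2) (ltn0Sn 4))).
  apply: ei_coloring_hom (@cycle_rel_triangle_free 5 isT) _.
  exact: (cycle_hom_mod (ltn0Sn 4) (cycle_hom_box (@cycle_hom_val 5) (cycle_hom_wind5 n_ge4))).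
- move=> k [f f_ei]; have n_gt1 : 1 < n by apply: ltn_trans n_ge4.
  have adj01 : cycle_rel (Ordinal (ltnW n_gt1)) (Ordinal n_gt1) by rewrite /cycle_rel /= modn_small.
  have /leq_card := ei_coloring_layer_inj C5_adj_or_P4_ends (@cycle_rel_sym n) adj01 isT f_ei.
  by rewrite !card_ord.
Qed.
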